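(* Let $n\ge2$, $F_1,\dots,F_n:\mathbb{R}^d\to\mathbb{R}^d$ with each $F_i$ $L_i$-Lipschitz, $F=\frac1n\sum_iF_i$ $L$-Lipschitz, and $z_*$ with $F(z_* )=0$. Let $L_{max}=\max_iL_i$, $A=\frac2n\sum_iL_i^2$, $\sigma_*^2=\frac1n\sum_i\|F_i(z_* )\|^2$. Suppose the SEG-RR step sizes satisfy $\gamma_1\le\frac{1}{3\sqrt{2n(n-1)}L_{max}}$ and $\gamma_2\le\frac{1}{\sqrt{n(n-1)}L_{max}}$. Then for every epoch $k$ the SEG-RR iterates satisfy $$\mathbb{E}_k\Big[\frac1n\sum_{j=0}^{n-1}\|z_j^k-z_0^k\|^2\Big]\le\big[10n^2L^2+A(25+n)\big]\gamma_1^2\|z_0^k-z_*\|^2+2(n+25)\gamma_1^2\sigma_*^2.$$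
   Context: SEG-RR with step sizes $\gamma_1,\gamma_2>0$: for each epoch $k$, with current point $z_0^k$, draw a permutation $\pi^k$ of $\{1,\dots,n\}$ uniformly at random, independently of the past; for $i=0,\dots,n-1$ set $\bar z_i^k=z_i^k-\gamma_2F_{\pi_i^k}(z_i^k)$, $z_{i+1}^k=z_i^k-\gamma_1F_{\pi_i^k}(\bar z_i^k)$; then $z_0^{k+1}=z_n^k$. $\mathbb{E}_k$ denotes expectation over $\pi^k$ conditional on the history up to $z_0^k$. *)

From mathcomp Require Import all_boot all_order all_algebra all_fingroup.
Set Implicit Arguments. Unset Strict Implicit. Unset Printing Implicit Defensive.
Import Order.TTheory GRing.Theory Num.Theory.
Local Open Scope ring_scope.

Definition enorm (R : rcfType) (d : nat) (v : 'rV[R]_d) : R :=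
  Num.sqrt (\sum_(k < d) v 0 k ^+ 2).

Definition lipschitz (R : rcfType) (d : nat) (G : 'rV[R]_d -> 'rV[R]_d) (L : R) :=
  forall x y, enorm (G x - G y) <= L * enorm (x - y).

Definition op_at (R : rcfType) (d n : nat) (F : 'I_n -> 'rV[R]_d -> 'rV[R]_d)
  (s : 'S_n) (j : nat) (z : 'rV[R]_d) : 'rV[R]_d :=
  oapp (fun i : 'I_n => F (s i) z) 0 (insub j).

Fixpoint seg_rr (R : rcfType) (d n : nat) (F : 'I_n -> 'rV[R]_d -> 'rV[R]_d)
  (g1 g2 : R) (s : 'S_n) (z0 : 'rV[R]_d) (j : nat) : 'rV[R]_d :=
  match j with
  | 0 => z0
  | j'.+1 =>
      let z := seg_rr F g1 g2 s z0 j' in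
      let zbar := z - g2 *: op_at F s j' z in
      z - g1 *: op_at F s j' zbar
  end.

Definition E_perm (R : rcfType) (n : nat) (X : 'S_n -> R) : R :=
  (n`!%:R)^-1 * \sum_(s : 'S_n) X s.

From mathcomp Require Import all_boot all_order all_algebra all_fingroup.
From mathcomp Require Import ring lra.
Import Order.TTheory GRing.Theory Num.Theory.
Set Implicit Arguments. Unset Strict Implicit. Unset Printing Implicit Defensive.
Local Open Scope ring_scope.

(* Write z_j - z_0 = -g1 * sum_{t<j} F_{pi_t}(zbar_t) and split every term into
   F_{pi_t}(z_0) plus an extrapolation error.  Lipschitz continuity bounds the
   errors by ||z_t - z_0|| and ||F_{pi_t}(z_0)||, so the drift
   W = sum_j ||z_j - z_0||^2 is at most a multiple of itself, which the step-size
   condition on g1 makes <= 4/9, plus g1^2 times the squared prefix sums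
   ||sum_{t<j} F_{pi_t}(z_0)||^2.  These are sums of samples drawn without
   replacement; their second moments are computed exactly from the one- and
   two-point marginals of a uniform permutation.  Finally sum_i ||F_i(z_0)||^2 and
   ||sum_i F_i(z_0)||^2 are bounded by Lipschitz continuity around z_star, where
   F(z_star) = 0. *)

Section SquaredNorm.
Variables (R : rcfType) (d : nat).
Implicit Types u v : 'rV[R]_d.

Definition sqnorm v : R := \sum_(k < d) v 0 k ^+ 2.
Definition dotv u v : R := \sum_(k < d) u 0 k * v 0 k.

Lemma sqnorm_ge0 v : 0 <= sqnorm v.
Proof. by apply: sumr_ge0 => k _; rewrite sqr_ge0. Qed.

Lemma enorm_sqr v : enorm v ^+ 2 = sqnorm v.
Proof. by rewrite sqr_sqrtr // sqnorm_ge0. Qed.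

Lemma sqnormN v : sqnorm (- v) = sqnorm v.
Proof. by apply: eq_bigr => k _; rewrite mxE sqrrN. Qed.

Lemma sqnormZ a v : sqnorm (a *: v) = a ^+ 2 * sqnorm v.
Proof. by rewrite /sqnorm mulr_sumr; apply: eq_bigr => k _; rewrite mxE exprMn. Qed.

Lemma sqnorm_dotv v : sqnorm v = dotv v v.
Proof. by apply: eq_bigr => k _; rewrite expr2. Qed.

Lemma dotv_le u v : 2 * dotv u v <= sqnorm u + sqnorm v.
Proof.
rewrite /dotv /sqnorm mulr_sumr -big_split; apply: ler_sum => k _ /=.
have := sqr_ge0 (u 0 k - v 0 k); lra.
Qed.

Lemma sqnormD_le u v : sqnorm (u + v) <= 2 * sqnorm u + 2 * sqnorm v.
Proof.
rewrite /sqnorm !mulr_sumr -big_split; apply: ler_sum => k _ /=; rewrite mxE.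
have := sqr_ge0 (u 0 k - v 0 k); nra.
Qed.

Lemma sqnorm_sum (I : finType) (P : pred I) (u : I -> 'rV[R]_d) :
  sqnorm (\sum_(i | P i) u i) = \sum_(i | P i) \sum_(i' | P i') dotv (u i) (u i').
Proof.
rewrite /sqnorm /dotv.
under eq_bigr => k _ do rewrite summxE expr2 mulr_suml; rewrite exchange_big /=.
apply: eq_bigr => i _; rewrite exchange_big /=; apply: eq_bigr => k _.
by rewrite mulr_sumr.
Qed.

Lemma sqnorm_sum_le (m : nat) (u : 'I_m -> 'rV[R]_d) :
  sqnorm (\sum_(i < m) u i) <= m%:R * \sum_(i < m) sqnorm (u i).
Proof.
have -> : m%:R * \sum_(i < m) sqnorm (u i) =
    \sum_(i < m) \sum_(i' < m) (sqnorm (u i) + sqnorm (u i')) / 2.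
  under [RHS]eq_bigr do rewrite -mulr_suml big_split sumr_const card_ord /=.
  rewrite -mulr_suml big_split /= sumr_const card_ord sumrMnl -mulr2n -mulrnA.
  by rewrite -[_ *+ (m * 2)]mulr_natr natrM; field.
rewrite sqnorm_sum; apply: ler_sum => i _; apply: ler_sum => i' _.
have := dotv_le (u i) (u i'); lra.
Qed.

End SquaredNorm.

Lemma lipschitz_sqnorm (R : rcfType) (d : nat) (G : 'rV[R]_d -> 'rV[R]_d) L :
  0 <= L -> lipschitz G L -> forall x y, sqnorm (G x - G y) <= L ^+ 2 * sqnorm (x - y).
Proof.
move=> L_ge0 lipG x y; rewrite -!enorm_sqr -exprMn.
by rewrite ler_pXn2r ?nnegrE ?mulr_ge0 ?sqrtr_ge0.
Qed.

Section SquaredLipschitz.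
Variables (R : rcfType) (d : nat) (G : 'rV[R]_d -> 'rV[R]_d) (M : R).
Hypothesis G_lip : forall x y, sqnorm (G x - G y) <= M * sqnorm (x - y).

Lemma sqnorm_lip_le x y : sqnorm (G x) <= 2 * M * sqnorm (x - y) + 2 * sqnorm (G y).
Proof.
rewrite -{1}(subrK (G y) (G x)); apply: le_trans (sqnormD_le _ _) _.
by rewrite -mulrA lerD2r ler_wpM2l ?G_lip.
Qed.

Lemma sqnorm_extrapolation_le (g : R) x y : 0 <= M -> g ^+ 2 * M <= 1 / 2 ->
  sqnorm (G (x - g *: G x) - G y) <= 4 * M * sqnorm (x - y) + 4 * (g ^+ 2 * M) * sqnorm (G y).
Proof.
move=> M_ge0 gM_small.
have X_ge0 := sqnorm_ge0 (x - y).
have zbar_le : sqnorm (x - g *: G x - y) <=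
    2 * sqnorm (x - y) + 2 * g ^+ 2 * (2 * M * sqnorm (x - y) + 2 * sqnorm (G y)).
  rewrite addrAC -mulrA; apply: le_trans (sqnormD_le _ _) _.
  by rewrite sqnormN sqnormZ lerD2l !ler_wpM2l ?sqr_ge0 ?sqnorm_lip_le.
apply: le_trans (G_lip _ _) _; apply: le_trans (ler_wpM2l M_ge0 zbar_le) _.
have := ler_wpM2r (mulr_ge0 M_ge0 X_ge0) gM_small.
nra.
Qed.

End SquaredLipschitz.

Lemma sqnorm_sum_le_lipschitz_mean (R : rcfType) (d n : nat)
    (F : 'I_n -> 'rV[R]_d -> 'rV[R]_d) (L : R) (zstar z : 'rV[R]_d) :
  (0 < n)%N -> 0 <= L -> lipschitz (fun x => n%:R^-1 *: \sum_i F i x) L ->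
  n%:R^-1 *: \sum_i F i zstar = 0 ->
  sqnorm (\sum_i F i z) <= n%:R ^+ 2 * (L ^+ 2 * sqnorm (z - zstar)).
Proof.
move=> n_gt0 L_ge0 Fbar_lip Fbar_zstar; have N_gt0 : 0 < n%:R :> R by rewrite ltr0n.
rewrite -[\sum_i F i z](scalerKV (lt0r_neq0 N_gt0)) sqnormZ ler_pM2l ?exprn_gt0 //.
by have := lipschitz_sqnorm L_ge0 Fbar_lip z zstar; rewrite /= Fbar_zstar subr0.
Qed.

Section UniformPermutation.
Variables (n : nat) (V : nmodType).

Lemma sum_perm_at (f : 'I_n -> V) (t : 'I_n) :
  (\sum_(s : 'S_n) f (s t)) *+ n = (\sum_i f i) *+ n`!.
Proof.
have sum_at_eq u : \sum_(s : 'S_n) f (s u) = \sum_(s : 'S_n) f (s t).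
  rewrite (reindex_inj (mulgI (tperm u t))); apply: eq_bigr => s _.
  by rewrite permM tpermL.
transitivity (\sum_(u < n) \sum_(s : 'S_n) f (s u)).
  by rewrite (eq_bigr _ (fun u _ => sum_at_eq u)) sumr_const card_ord.
rewrite exchange_big /= -card_Sn -sumr_const; apply: eq_bigr => s _.
by rewrite [RHS](reindex_inj (@perm_inj _ s)).
Qed.

Lemma sum_perm_at2 (g : 'I_n -> 'I_n -> V) (t t' : 'I_n) : t != t' ->
  (\sum_(s : 'S_n) g (s t) (s t')) *+ (n * n.-1) =
  (\sum_i \sum_(i' | i' != i) g i i') *+ n`!.
Proof.
move=> neq_tt'.
have sum_at_eq u u' : u != u' ->
    \sum_(s : 'S_n) g (s u) (s u') = \sum_(s : 'S_n) g (s t) (s t').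
  (* Reindex by the permutation [q * tperm (q u') t'], which maps u to t and u' to t'. *)
  move=> neq_uu'; pose q := tperm u t.
  have qu : q u = t by rewrite tpermL.
  have qu'_neq : q u' != t by rewrite -qu (inj_eq perm_inj) eq_sym.
  rewrite (reindex_inj (mulgI (q * tperm (q u') t')%g)); apply: eq_bigr => s _.
  by rewrite !permM qu tpermL tpermD // eq_sym.
transitivity (\sum_(u < n) \sum_(u' | u' != u) \sum_(s : 'S_n) g (s u) (s u')).
  have inner u : \sum_(u' | u' != u) \sum_(s : 'S_n) g (s u) (s u') =
      (\sum_(s : 'S_n) g (s t) (s t')) *+ n.-1.
    rewrite (eq_bigr (fun=> \sum_(s : 'S_n) g (s t) (s t'))).
      by rewrite sumr_const cardC1 card_ord.
    by move=> u' neq_u'u; rewrite sum_at_eq // eq_sym.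
  by rewrite (eq_bigr _ (fun u _ => inner u)) sumr_const card_ord -mulrnA mulnC.
under eq_bigr => u _ do rewrite exchange_big.
rewrite exchange_big /= -card_Sn -sumr_const; apply: eq_bigr => s _.
rewrite [RHS](reindex_inj (@perm_inj _ s)); apply: eq_bigr => u _.
rewrite [RHS](reindex_inj (@perm_inj _ s)); apply: eq_bigl => u'.
by rewrite (inj_eq perm_inj).
Qed.

End UniformPermutation.

Lemma nn1_ge2 (R : realDomainType) (n : nat) : (1 < n)%N -> 2 <= n%:R * (n%:R - 1) :> R.
Proof.
move=> n_gt1; have N_ge2 : 2 <= n%:R :> R by rewrite (ler_nat R 2).
have : 0 <= (n%:R - 2) * (n%:R + 1) :> R by rewrite mulr_ge0 //; lra.
lra.
Qed.

Section PermExpectation.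
Variables (R : rcfType) (n : nat).
Implicit Types X Y : 'S_n -> R.

Lemma fact_natr_neq0 : (n`!%:R : R) != 0.
Proof. by rewrite pnatr_eq0 -lt0n fact_gt0. Qed.

Lemma eq_E_perm X Y : (forall s, X s = Y s) -> E_perm X = E_perm Y.
Proof. by move=> eqXY; congr (_ * _); apply: eq_bigr. Qed.

Lemma ler_E_perm X Y : (forall s, X s <= Y s) -> E_perm X <= E_perm Y.
Proof. by move=> leXY; rewrite ler_wpM2l ?invr_ge0 ?ler0n ?ler_sum. Qed.

Lemma E_permD X Y : E_perm (fun s => X s + Y s) = E_perm X + E_perm Y.
Proof. by rewrite /E_perm big_split mulrDr. Qed.

Lemma E_permZ (c : R) X : E_perm (fun s => c * X s) = c * E_perm X.
Proof. by rewrite /E_perm -mulr_sumr mulrCA. Qed.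

Lemma E_perm_cst (c : R) : E_perm (fun _ : 'S_n => c) = c.
Proof.
rewrite /E_perm sumr_const (_ : #|_| = n`!) ?card_Sn // -[c *+ _]mulr_natl.
by rewrite mulKf ?fact_natr_neq0.
Qed.

Lemma E_perm_sum (I : finType) (P : pred I) (X : I -> 'S_n -> R) :
  E_perm (fun s => \sum_(i | P i) X i s) = \sum_(i | P i) E_perm (X i).
Proof. by rewrite /E_perm exchange_big mulr_sumr. Qed.

Lemma E_perm_at (f : 'I_n -> R) (t : 'I_n) :
  E_perm (fun s => f (s t)) = (\sum_i f i) / n%:R.
Proof.
have n_neq0 : (n%:R : R) != 0 by rewrite pnatr_eq0 -lt0n (leq_ltn_trans _ (ltn_ord t)).
apply: (mulIf n_neq0); rewrite mulfVK // /E_perm -mulrA mulr_natr sum_perm_at.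
by rewrite -(mulr_natr (\sum_i f i)) mulrCA mulVf ?mulr1 ?fact_natr_neq0.
Qed.

Lemma E_perm_at2 (g : 'I_n -> 'I_n -> R) (t t' : 'I_n) : t != t' ->
  E_perm (fun s => g (s t) (s t')) =
  (\sum_i \sum_(i' | i' != i) g i i') / (n%:R * (n%:R - 1)).
Proof.
move=> neq_tt'.
have n_gt1 : (1 < n)%N.
  case: n t t' neq_tt' => [[] // | [| m] t t' //].
  by rewrite (ord1 t) (ord1 t').
have nn1_eq : (n%:R * (n%:R - 1) : R) = (n * n.-1)%:R.
  by rewrite natrM -subn1 natrB ?(ltnW n_gt1).
have nn1_neq0 : (n%:R * (n%:R - 1) : R) != 0.
  by rewrite gt_eqF // (lt_le_trans _ (nn1_ge2 R n_gt1)).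
apply: (mulIf nn1_neq0); rewrite mulfVK // /E_perm -mulrA nn1_eq mulr_natr.
rewrite sum_perm_at2 // -(mulr_natr (\sum_i \sum_(i' | i' != i) g i i')).
by rewrite mulrCA mulVf ?mulr1 ?fact_natr_neq0.
Qed.

End PermExpectation.

Section SamplingWithoutReplacement.
Variables (R : rcfType) (d n : nat) (b : 'I_n -> 'rV[R]_d).
Hypothesis n_gt1 : (1 < n)%N.
Local Notation N := (n%:R : R).
Local Notation Sv := (\sum_i sqnorm (b i)).
Local Notation Ss := (sqnorm (\sum_i b i)).

Lemma E_perm_dotv (t t' : 'I_n) :
  E_perm (fun s : 'S_n => dotv (b (s t)) (b (s t'))) =
  if t == t' then Sv / N else (Ss - Sv) / (N * (N - 1)).
Proof.
case: eqP => [<- | /eqP neq_tt'].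
  by rewrite (E_perm_at (fun i => dotv (b i) (b i))); under eq_bigr do rewrite -sqnorm_dotv.
rewrite (E_perm_at2 (fun i i' => dotv (b i) (b i')) neq_tt') sqnorm_sum -sumrB.
congr (_ / _); apply: eq_bigr => i _.
by rewrite [in RHS](bigD1 i) //= sqnorm_dotv addrAC subrr add0r.
Qed.

Lemma E_perm_sqnorm_prefix j : (j <= n)%N ->
  E_perm (fun s : 'S_n => sqnorm (\sum_(t < n | (t < j)%N) b (s t))) * (N * (N - 1)) =
  j%:R * (j%:R - 1) * Ss + j%:R * (N - j%:R) * Sv.
Proof.
move=> le_jn.
have sum_prefix_cst (c : R) : \sum_(t < n | (t < j)%N) c = j%:R * c.
  by rewrite -(big_ord_widen n (fun=> c) le_jn) sumr_const card_ord mulr_natl.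
set x := Sv / N; set y := (Ss - Sv) / (N * (N - 1)).
have row_sum (t : 'I_n) : (t < j)%N ->
    \sum_(t' < n | (t' < j)%N) (if t == t' then x else y) = j%:R * y + (x - y).
  move=> lt_tj.
  rewrite (eq_bigr (fun t' => y + (if t == t' then x - y else 0))); last first.
    by move=> t' _; case: eqP => _; rewrite ?addr0 // addrC subrK.
  rewrite big_split /= sum_prefix_cst (bigD1 t) //= eqxx big1 ?addr0 // => t' /andP[_ ne_t't].
  by rewrite eq_sym (negbTE ne_t't).
under eq_E_perm => s do rewrite sqnorm_sum.
rewrite E_perm_sum; under eq_bigr => t _ do rewrite E_perm_sum.
under eq_bigr => t _ do under eq_bigr => t' _ do rewrite E_perm_dotv.
rewrite (eq_bigr _ row_sum) sum_prefix_cst /x /y.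
have N_gt1 : 1 < N by rewrite ltr1n.
field; rewrite subr_eq0 !gt_eqF //; lra.
Qed.

Lemma E_perm_sum_sqnorm_prefix_le :
  E_perm (fun s : 'S_n => \sum_(j < n) sqnorm (\sum_(t < n | (t < j)%N) b (s t)))
  <= N * Ss + (N + 2) / 4 * Sv.
Proof.
have N_ge2 : 2 <= N by rewrite (ler_nat R 2).
have Sv_ge0 : 0 <= Sv by apply: sumr_ge0 => i _; apply: sqnorm_ge0.
have Ss_ge0 := sqnorm_ge0 (\sum_i b i).
have E_prefix_le (j : 'I_n) :
    E_perm (fun s : 'S_n => sqnorm (\sum_(t < n | (t < j)%N) b (s t)))
    <= Ss + (N + 2) / (4 * N) * Sv.
  have nn1_gt0 : 0 < N * (N - 1) by rewrite (lt_le_trans _ (nn1_ge2 R n_gt1)).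
  rewrite -(ler_pM2r nn1_gt0) E_perm_sqnorm_prefix; last exact: ltnW.
  have -> : (Ss + (N + 2) / (4 * N) * Sv) * (N * (N - 1)) =
      N * (N - 1) * Ss + (N + 2) * (N - 1) / 4 * Sv by field; lra.
  have j_le : (j%:R : R) <= N - 1 by rewrite lerBrDr natr1 ler_nat.
  have j_ge0 : (0 : R) <= j%:R by [].
  apply: lerD; apply: ler_wpM2r => //.
    have : 0 <= (N - j%:R) * (N + j%:R - 1) by rewrite mulr_ge0 //; lra.
    lra.
  (* (N + 2) (N - 1) - 4 j (N - j) = (N - 2 j)^2 + N - 2 *)
  have := sqr_ge0 (N - 2 * j%:R).
  lra.
have -> : N * Ss + (N + 2) / 4 * Sv = \sum_(j < n) (Ss + (N + 2) / (4 * N) * Sv).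
  by rewrite sumr_const card_ord -[(_ + _) *+ n]mulr_natl; field; lra.
by rewrite E_perm_sum; apply: ler_sum => j _; apply: E_prefix_le.
Qed.

End SamplingWithoutReplacement.

Section Epoch.
Variables (R : rcfType) (d n : nat) (F : 'I_n -> 'rV[R]_d -> 'rV[R]_d) (M g1 g2 : R).
Hypothesis n_gt1 : (1 < n)%N.
Hypothesis M_ge0 : 0 <= M.
Hypothesis F_lip : forall i x y, sqnorm (F i x - F i y) <= M * sqnorm (x - y).
(* With M = Lmax^2 these are the squared step-size conditions of the theorem. *)
Hypothesis g1_small : 18 * g1 ^+ 2 * M * (n%:R * (n%:R - 1)) <= 1.
Hypothesis g2_small : g2 ^+ 2 * M * (n%:R * (n%:R - 1)) <= 1.
Local Notation N := (n%:R : R).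

Lemma op_at_ord (s : 'S_n) (t : 'I_n) x : op_at F s t x = F (s t) x.
Proof. by rewrite /op_at valK. Qed.

Section Deterministic.
Variables (s : 'S_n) (z0 : 'rV[R]_d).
Local Notation z := (seg_rr F g1 g2 s z0).
Local Notation err t :=
  (op_at F s t (z t - g2 *: op_at F s t (z t)) - op_at F s t z0).
Local Notation prefix j := (\sum_(t < n | (t < j)%N) F (s t) z0).

Lemma seg_rr_sub j : (j <= n)%N ->
  z j - z0 = - g1 *: (\sum_(t < j) err t + prefix j).
Proof.
move=> le_jn; under [X in _ *: (_ + X)]eq_bigr do rewrite -op_at_ord.
rewrite -(big_ord_widen n (fun t => op_at F s t z0) le_jn).
rewrite -big_split /=; under eq_bigr do rewrite subrK.
elim: j le_jn => [|j IHj] lt_jn; first by rewrite big_ord0 scaler0 subrr.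
rewrite big_ord_recr /= scalerDr -IHj; last exact: ltnW.
by rewrite scaleNr addrAC.
Qed.

Lemma sqnorm_err_le (t : 'I_n) :
  sqnorm (err t) <= 4 * M * sqnorm (z t - z0) + 4 * (g2 ^+ 2 * M) * sqnorm (F (s t) z0).
Proof.
rewrite !op_at_ord; apply: sqnorm_extrapolation_le => //.
rewrite ler_pdivlMr //; apply: le_trans g2_small.
by apply: ler_wpM2l; [rewrite mulr_ge0 ?sqr_ge0 | exact: nn1_ge2].
Qed.

Lemma sqnorm_seg_rr_sub_le (j : 'I_n) :
  sqnorm (z j - z0) <=
  2 * g1 ^+ 2 * ((N - 1) * \sum_(t < n) sqnorm (err t) + sqnorm (prefix j)).
Proof.
rewrite seg_rr_sub; last exact: ltnW.
rewrite sqnormZ sqrrN -mulrA mulrCA; apply: ler_wpM2l; first exact: sqr_ge0.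
apply: le_trans (sqnormD_le _ _) _; rewrite mulrDr lerD2r; apply: ler_wpM2l => //.
apply: le_trans (sqnorm_sum_le _) _; apply: ler_pM.
- exact: ler0n.
- by apply: sumr_ge0 => t _; apply: sqnorm_ge0.
- by rewrite lerBrDr natr1 ler_nat.
rewrite (big_ord_widen n (fun t => sqnorm (err t)) (ltnW (ltn_ord j))).
rewrite [leRHS](bigID (fun t : 'I_n => (t < j)%N)) /= lerDl.
by apply: sumr_ge0 => t _; apply: sqnorm_ge0.
Qed.

Lemma seg_rr_drift_le :
  \sum_(j < n) sqnorm (z j - z0) <=
  9 / 5 * g1 ^+ 2 * (8 * \sum_i sqnorm (F i z0) + 2 * \sum_(j < n) sqnorm (prefix j)).
Proof.
set W := \sum_(j < n) _; set Q := \sum_(t < n) sqnorm (err t).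
set Sv := \sum_i _; set T := \sum_(j < n) sqnorm _.
have W_le : W <= 2 * g1 ^+ 2 * (N * (N - 1) * Q + T).
  apply: le_trans (ler_sum _ (fun j _ => sqnorm_seg_rr_sub_le j)) _.
  rewrite -mulr_sumr big_split sumr_const card_ord /= -/Q.
  by rewrite -[(_ * Q) *+ n]mulr_natl mulrA.
have Q_le : Q <= 4 * M * W + 4 * (g2 ^+ 2 * M) * Sv.
  apply: le_trans (ler_sum _ (fun t _ => sqnorm_err_le t)) _.
  by rewrite big_split /= -!mulr_sumr /Sv [in leRHS](reindex_inj (@perm_inj _ s)).
have W_ge0 : 0 <= W by apply: sumr_ge0 => j _; apply: sqnorm_ge0.
have Sv_ge0 : 0 <= Sv by apply: sumr_ge0 => i _; apply: sqnorm_ge0.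
have K_ge0 : 0 <= N * (N - 1) by apply: le_trans (nn1_ge2 R n_gt1).
have G_ge0 := sqr_ge0 g1.
have := ler_wpM2l (mulr_ge0 (mulr_ge0 (ler0n _ 2) G_ge0) K_ge0) Q_le.
have := ler_wpM2r W_ge0 g1_small.
have := ler_wpM2l (mulr_ge0 G_ge0 Sv_ge0) g2_small.
nra.
Qed.

End Deterministic.

Lemma E_seg_rr_drift_le z0 :
  E_perm (fun s : 'S_n => \sum_(j < n) sqnorm (seg_rr F g1 g2 s z0 j - z0)) <=
  9 / 10 * g1 ^+ 2 * ((N + 18) * \sum_i sqnorm (F i z0) + 4 * N * sqnorm (\sum_i F i z0)).
Proof.
apply: le_trans (ler_E_perm (fun s => seg_rr_drift_le s z0)) _.
rewrite E_permZ E_permD E_perm_cst E_permZ.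
have := E_perm_sum_sqnorm_prefix_le (fun i => F i z0) n_gt1.
have := sqr_ge0 g1.
nra.
Qed.

Lemma E_seg_rr_mean_drift_le z0 (V B : R) :
  \sum_i sqnorm (F i z0) <= N * V -> sqnorm (\sum_i F i z0) <= N ^+ 2 * B ->
  E_perm (fun s : 'S_n => N^-1 * \sum_(j < n) sqnorm (seg_rr F g1 g2 s z0 j - z0)) <=
  g1 ^+ 2 * ((N + 25) * V + 10 * N ^+ 2 * B).
Proof.
move=> Sv_le Ss_le.
have N_gt0 : 0 < N by rewrite ltr0n ltnW.
have G_ge0 := sqr_ge0 g1.
have NV_ge0 : 0 <= N * V := le_trans (sumr_ge0 _ (fun i _ => sqnorm_ge0 _)) Sv_le.
have N2B_ge0 : 0 <= N ^+ 2 * B := le_trans (sqnorm_ge0 _) Ss_le.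
rewrite E_permZ ler_pdivrMl //; apply: le_trans (E_seg_rr_drift_le z0) _.
have := ler_wpM2l (mulr_ge0 G_ge0 (addr_ge0 (ltW N_gt0) (ler0n _ 18))) Sv_le.
have := ler_wpM2l (mulr_ge0 G_ge0 (ltW N_gt0)) Ss_le.
have := mulr_ge0 (mulr_ge0 G_ge0 NV_ge0) (ltW N_gt0).
have := mulr_ge0 (mulr_ge0 G_ge0 N2B_ge0) (ltW N_gt0).
have := mulr_ge0 G_ge0 NV_ge0.
lra.
Qed.

End Epoch.

Lemma mul_sqrt_le1 (R : rcfType) (a K : R) :
  0 <= a -> 0 <= K -> a * Num.sqrt K <= 1 -> a ^+ 2 * K <= 1.
Proof.
move=> a_ge0 K_ge0 le1; rewrite -(sqr_sqrtr K_ge0) -exprMn.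
by rewrite exprn_ile1 // mulr_ge0 ?sqrtr_ge0.
Qed.

Theorem lemma2 (R : rcfType) (d n : nat) (F : 'I_n -> 'rV[R]_d -> 'rV[R]_d)
  (Li : 'I_n -> R) (L : R) (zstar : 'rV[R]_d) (g1 g2 : R) :
  (2 <= n)%N ->
  (forall i, 0 <= Li i) -> (forall i, lipschitz (F i) (Li i)) ->
  0 <= L -> lipschitz (fun z => n%:R^-1 *: \sum_(i < n) F i z) L ->
  n%:R^-1 *: \sum_(i < n) F i zstar = 0 ->
  0 < g1 -> 0 < g2 ->
  let Lmax := \big[Num.max/0]_(i < n) Li i in
  let A := 2 / n%:R * \sum_(i < n) Li i ^+ 2 in
  let sigma2 := n%:R^-1 * \sum_(i < n) enorm (F i zstar) ^+ 2 in
  g1 * (3 * Num.sqrt (2 * n%:R * (n%:R - 1)) * Lmax) <= 1 ->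
  g2 * (Num.sqrt (n%:R * (n%:R - 1)) * Lmax) <= 1 ->
  forall z0 : 'rV[R]_d,
  E_perm (fun s : 'S_n =>
      n%:R^-1 * \sum_(j < n) enorm (seg_rr F g1 g2 s z0 j - z0) ^+ 2)
  <= (10 * n%:R ^+ 2 * L ^+ 2 + A * (25 + n%:R)) * g1 ^+ 2 * enorm (z0 - zstar) ^+ 2
     + 2 * (n%:R + 25) * g1 ^+ 2 * sigma2.
Proof.
move=> n_gt1 Li_ge0 Fi_lip L_ge0 Fbar_lip Fbar_zstar g1_gt0 g2_gt0 Lmax A sigma2 g1_le g2_le z0.
set N : R := n%:R; set r := sqnorm (z0 - zstar).
have N_ge2 : 2 <= N by rewrite (ler_nat R 2).
have Lmax_ge0 : 0 <= Lmax := bigmax_ge_id _ _ _ _.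
have F_lip i x y : sqnorm (F i x - F i y) <= Lmax ^+ 2 * sqnorm (x - y).
  apply: le_trans (lipschitz_sqnorm (Li_ge0 i) (Fi_lip i) x y) _.
  by rewrite ler_wpM2r ?sqnorm_ge0 // ler_sqr ?nnegrE ?Li_ge0 // le_bigmax.
have g1_small : 18 * g1 ^+ 2 * Lmax ^+ 2 * (N * (N - 1)) <= 1.
  have -> : 18 * g1 ^+ 2 * Lmax ^+ 2 * (N * (N - 1)) =
      (g1 * 3 * Lmax) ^+ 2 * (2 * N * (N - 1)) by ring.
  apply: mul_sqrt_le1; [nra | nra |].
  by rewrite (_ : _ * _ = g1 * (3 * Num.sqrt (2 * N * (N - 1)) * Lmax)); last ring.
have g2_small : g2 ^+ 2 * Lmax ^+ 2 * (N * (N - 1)) <= 1.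
  rewrite -exprMn; apply: mul_sqrt_le1; [nra | nra |].
  by rewrite (_ : _ * _ = g2 * (Num.sqrt (N * (N - 1)) * Lmax)); last ring.
have Sv_le : \sum_i sqnorm (F i z0) <= N * (A * r + 2 * sigma2).
  have -> : N * (A * r + 2 * sigma2) = \sum_i (2 * Li i ^+ 2 * r + 2 * sqnorm (F i zstar)).
    under [RHS]eq_bigr do rewrite -enorm_sqr.
    rewrite big_split /= -mulr_suml -!mulr_sumr /A /sigma2 /N; field.
    by rewrite pnatr_eq0 -lt0n ltnW.
  apply: ler_sum => i _.
  exact: sqnorm_lip_le (lipschitz_sqnorm (Li_ge0 i) (Fi_lip i)) _ _.
have Ss_le : sqnorm (\sum_i F i z0) <= N ^+ 2 * (L ^+ 2 * r).
  exact: sqnorm_sum_le_lipschitz_mean (ltnW n_gt1) L_ge0 Fbar_lip Fbar_zstar.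
under eq_E_perm => s do under eq_bigr => j _ do rewrite enorm_sqr.
rewrite enorm_sqr -/r.
apply: le_trans (E_seg_rr_mean_drift_le n_gt1 (sqr_ge0 Lmax) F_lip g1_small g2_small
  Sv_le Ss_le) _.
rewrite [leRHS](_ : _ =
  g1 ^+ 2 * ((N + 25) * (A * r + 2 * sigma2) + 10 * N ^+ 2 * (L ^+ 2 * r))) //.
ring.
Qed.
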